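(* Let $0\le a\le b$ and let $Q$ be a path linkage with four edges $e_1,e_2,e_3,e_4$ (in this order along the path) of lengths $l(e_1)=\frac{a+b}{2}$ and $l(e_2)=l(e_3)=l(e_4)=\frac{b-a}{6}$. Then $[Q]=[a,b]$ and $\nabla(Q)=[a,b]$.
   Context: A path linkage is a linkage $P=(G,l)$ where $G$ is a path graph with vertices $1,\dots,k+1$ and edges $\{i,i+1\}$; its terminal vertices are $s=1$, $t=k+1$. $C(P)=\{p:V\to\mathbb R^2:|p(u)-p(v)|=l(\{u,v\})\text{ for every edge}\}$, $M(P)$ is the quotient of $C(P)$ by the group of orientation preserving isometries of $\mathbb R^2$, $\theta:M(P)\to\mathbb R$, $\theta(p)=|p(s)-p(t)|$, $[P]=\theta(M(P))$, and $\nabla(P)=\{x\in[P]:\theta^{-1}(x)\text{ is connected}\}$. *)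

From Stdlib Require Import Reals Lra.
Open Scope R_scope.

Definition point := (R * R)%type.
Definition dist2 (u v : point) : R :=
  sqrt ((fst u - fst v) ^ 2 + (snd u - snd v) ^ 2).

Definition cross (u v w : point) : R :=
  (fst v - fst u) * (snd w - snd u) - (snd v - snd u) * (fst w - fst u).

Definition or_isometry (g : point -> point) : Prop :=
  (forall u v, dist2 (g u) (g v) = dist2 u v) /\
  (forall u v w, cross (g u) (g v) (g w) = cross u v w).

(** A path linkage: path graph on vertices 1..k+1, edges {i,i+1} (1<=i<=k),
    edge {i,i+1} having length [pl_len i]. *)
Record PathLinkage := mkPL { pl_k : nat ; pl_len : nat -> R }.

(** Placements of the vertices (only the values at 1..k+1 are relevant). *)
Definition placement := nat -> point.

Definition config (P : PathLinkage) (p : placement) : Prop :=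
  forall i : nat, (1 <= i <= pl_k P)%nat ->
    dist2 (p i) (p (S i)) = pl_len P i.

(** Equivalence under orientation preserving isometries (the fibres of
    C(P) -> M(P)). *)
Definition equivP (P : PathLinkage) (p q : placement) : Prop :=
  exists g, or_isometry g /\
    forall i : nat, (1 <= i <= S (pl_k P))%nat -> q i = g (p i).

(** Sup-distance of placements on the vertex set V = {1..k+1}
    (the product topology on (R^2)^V). *)
Definition vdist_le (P : PathLinkage) (p q : placement) (e : R) : Prop :=
  forall i : nat, (1 <= i <= S (pl_k P))%nat -> dist2 (p i) (q i) < e.

(** Subsets of M(P) are represented by their preimages in C(P), i.e. by
    saturated subsets of C(P). *)
Definition saturated (P : PathLinkage) (U : placement -> Prop) : Prop :=
  (forall p, U p -> config P p) /\
  (forall p q, U p -> config P q -> equivP P p q -> U q).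

(** Quotient topology on M(P): a subset is open iff its preimage is
    (relatively) open in C(P). *)
Definition openM (P : PathLinkage) (U : placement -> Prop) : Prop :=
  saturated P U /\
  forall p, U p -> exists e, e > 0 /\
    forall q, config P q -> vdist_le P p q e -> U q.

Definition connectedM (P : PathLinkage) (A : placement -> Prop) : Prop :=
  ~ exists U1 U2, openM P U1 /\ openM P U2 /\
      (forall p, A p -> U1 p \/ U2 p) /\
      (exists p, A p /\ U1 p) /\ (exists p, A p /\ U2 p) /\
      (forall p, A p -> U1 p -> U2 p -> False).

(** theta(p) = |p(s) - p(t)|, s = 1, t = k+1 (invariant under isometries). *)
Definition theta (P : PathLinkage) (p : placement) : R :=
  dist2 (p 1%nat) (p (S (pl_k P))).

(** Preimage in C(P) of theta^{-1}(x) subset M(P). *)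
Definition fibre (P : PathLinkage) (x : R) (p : placement) : Prop :=
  config P p /\ theta P p = x.

Definition range (P : PathLinkage) (x : R) : Prop :=
  exists p, config P p /\ theta P p = x.

Definition nabla (P : PathLinkage) (x : R) : Prop :=
  range P x /\ connectedM P (fibre P x).

Definition linkQ (a b : R) : PathLinkage :=
  mkPL 4 (fun i => match i with
                   | 1%nat => (a + b) / 2
                   | _ => (b - a) / 6
                   end).

From Stdlib Require Import Reals Lra Lia Psatz Classical.
Open Scope R_scope.

(* Write L = (a+b)/2 and r = (b-a)/6, so that a = L - 3r and b = L + 3r: the triangle
   inequality confines theta to [a, b], and suitably bent arms realise every value.

   For connectedness we join every configuration of a fibre theta^{-1}(x) to a fixed one by
   paths: points joined by a path lie in one quasi-component, and a set all of whose points
   lie in one quasi-component is connected.  Normalise p2 = 0 and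
   p3 = (r, 0).  Then p4, p5 are described by two angles h, y with
   |p5|^2 = r^2 (1 + 4 cos^2 h + 4 cos h cos y), and p1 is the apex, on one of two sides, of the
   triangle on 0 and p5 with sides L and x.  Shrinking |y| and then |h| only increases |p5|, so
   it straightens the arm along the x-axis while keeping |p5| >= |L - x|.  The two sides are
   joined through a configuration with |p5| = |L - x|, where the two apexes coincide, or, if
   x = L, by a path along which p5 passes through the origin.  Finally the configurations with
   p5 = p2 (only possible when x = L) are first moved off by swinging p1 about the origin. *)

Definition sqd (u v : point) : R := (fst u - fst v) ^ 2 + (snd u - snd v) ^ 2.

Definition norm2 (w : point) : R := fst w ^ 2 + snd w ^ 2.

Lemma sqd_ge0 u v : 0 <= sqd u v.
Proof.
  unfold sqd. pose proof (pow2_ge_0 (fst u - fst v)). pose proof (pow2_ge_0 (snd u - snd v)). lra.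
Qed.

Lemma sqd_origin w : sqd w (0, 0) = norm2 w.
Proof. unfold sqd, norm2; cbn [fst snd]; ring. Qed.

Lemma sqd_sym u v : sqd u v = sqd v u.
Proof. unfold sqd. ring. Qed.

Lemma dist2_of_sqd u v l : 0 <= l -> sqd u v = l ^ 2 -> dist2 u v = l.
Proof. intros Hl H. unfold dist2; fold (sqd u v). rewrite H. now apply sqrt_pow2. Qed.

Lemma sqd_of_dist2 u v l : dist2 u v = l -> sqd u v = l ^ 2.
Proof. intros <-. unfold dist2; fold (sqd u v). rewrite pow2_sqrt; auto using sqd_ge0. Qed.

Lemma dist2_sym u v : dist2 u v = dist2 v u.
Proof. unfold dist2. f_equal. ring. Qed.

Lemma dist2_triangle u v w : dist2 u w <= dist2 u v + dist2 v w.
Proof.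
  destruct u as [u1 u2], v as [v1 v2], w as [w1 w2].
  pose proof (Rgeom.triangle u1 u2 w1 w2 v1 v2) as H.
  unfold Rgeom.dist_euc in H. rewrite !Rsqr_pow2 in H. exact H.
Qed.

Lemma dist2_eq0 u v : dist2 u v = 0 -> u = v.
Proof.
  intros H. apply sqd_of_dist2 in H. destruct u as [u1 u2], v as [v1 v2].
  unfold sqd in H; cbn [fst snd] in H.
  replace (0 ^ 2) with 0 in H by ring. rewrite <- !Rsqr_pow2 in H.
  apply Rplus_eq_0 in H; [|apply Rle_0_sqr..]. destruct H as [H1 H2].
  apply Rsqr_0_uniq in H1, H2. f_equal; lra.
Qed.

Lemma dist2_le_abs u v : dist2 u v <= Rabs (fst u - fst v) + Rabs (snd u - snd v).
Proof.
  set (p := fst u - fst v). set (q := snd u - snd v).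
  pose proof (Rabs_pos p). pose proof (Rabs_pos q).
  unfold dist2; fold p q. rewrite <- (sqrt_pow2 (Rabs p + Rabs q)) by lra.
  apply sqrt_le_1_alt. rewrite <- (pow2_abs p), <- (pow2_abs q). nra.
Qed.

Lemma sqd_ge_dist_diff u v w : (dist2 u v - dist2 u w) ^ 2 <= sqd v w.
Proof.
  rewrite <- (pow2_sqrt (sqd v w)) by apply sqd_ge0. change (sqrt (sqd v w)) with (dist2 v w).
  pose proof (dist2_triangle u v w). pose proof (dist2_triangle u w v).
  rewrite (dist2_sym w v) in *.
  rewrite <- (pow2_abs (dist2 u v - dist2 u w)).
  apply pow_incr. split; [apply Rabs_pos | apply Rabs_le; lra].
Qed.

Lemma dist2_origin_of_norm2 w l : 0 <= l -> norm2 w = l ^ 2 -> dist2 (0, 0) w = l.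
Proof. intros Hl H. apply dist2_of_sqd; auto. unfold sqd, norm2 in *; cbn [fst snd] in *. lra. Qed.

Lemma norm2_eq0 w : norm2 w = 0 -> w = (0, 0).
Proof. intros H. apply dist2_eq0, dist2_of_sqd; [lra|]. rewrite sqd_origin, H. ring. Qed.

Lemma sin2_cos2_pow t : sin t ^ 2 + cos t ^ 2 = 1.
Proof. rewrite <- !Rsqr_pow2. apply sin2_cos2. Qed.

Lemma cos_abs z : cos (Rabs z) = cos z.
Proof. destruct (Rcase_abs z); [rewrite Rabs_left, cos_neg | rewrite Rabs_right]; lra. Qed.

Lemma cos_le_of_abs_le a b : Rabs a <= Rabs b -> Rabs b <= PI -> cos b <= cos a.
Proof.
  intros Hab Hb. rewrite <- (cos_abs a), <- (cos_abs b).
  pose proof (Rabs_pos a). apply cos_decr_1; lra.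
Qed.

Lemma cos_ge0_of_abs_le h : Rabs h <= PI / 2 -> 0 <= cos h.
Proof. intros H. rewrite <- cos_abs. pose proof (Rabs_pos h). apply cos_ge_0; lra. Qed.

Lemma acos_nonneg_spec c : 0 <= c <= 1 -> Rabs (acos c) <= PI / 2 /\ cos (acos c) = c.
Proof.
  intros Hc. pose proof (acos_bound c). assert (E : cos (acos c) = c) by (apply cos_acos; lra).
  split; auto. rewrite Rabs_right by lra.
  destruct (Rle_lt_dec (acos c) (PI / 2)) as [|Hgt]; auto.
  assert (cos (acos c) < 0) by (apply cos_lt_0; lra). lra.
Qed.

Lemma angle_of u : norm2 u = 1 -> exists p, - PI <= p <= PI /\ u = (cos p, sin p).
Proof.
  destruct u as [c s]. unfold norm2; cbn [fst snd]. intros H.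
  assert (Hc : -1 <= c <= 1) by nra.
  pose proof (acos_bound c). pose proof (cos_acos c Hc). pose proof (sin_acos c Hc).
  assert (Hs : sqrt (1 - c²) = Rabs s).
  { rewrite <- sqrt_Rsqr_abs. f_equal. unfold Rsqr; nra. }
  destruct (Rle_lt_dec 0 s).
  - exists (acos c). split; [lra|]. f_equal; auto. rewrite H2, Hs, Rabs_right; lra.
  - exists (- acos c). split; [lra|]. rewrite cos_neg, sin_neg. f_equal; auto.
    rewrite H2, Hs, Rabs_left; lra.
Qed.

Lemma angle_near u c : norm2 u = 1 -> Rabs c <= PI ->
  exists p, Rabs (p - c) <= PI /\ u = (cos p, sin p).
Proof.
  intros Hu Hc. pose proof (Rle_abs c). pose proof (Rle_abs (- c)). rewrite Rabs_Ropp in *.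
  destruct (angle_of u Hu) as [p [Hp ->]].
  destruct (Rlt_le_dec PI (p - c)); [|destruct (Rlt_le_dec (p - c) (- PI))].
  - exists (p - 2 * PI). split; [apply Rabs_le; lra|].
    rewrite cos_minus, sin_minus, cos_2PI, sin_2PI. f_equal; ring.
  - exists (p + 2 * PI). split; [apply Rabs_le; lra|].
    rewrite cos_plus, sin_plus, cos_2PI, sin_2PI. f_equal; ring.
  - exists p. split; [apply Rabs_le; lra | reflexivity].
Qed.

(** * Quasi-components of subsets of M(P) *)

(* [p] and [q] lie in the same quasi-component of the subspace [A] of M(P). *)
Definition linked (P : PathLinkage) (A : placement -> Prop) (p q : placement) : Prop :=
  A p /\ A q /\ forall U1 U2, openM P U1 -> openM P U2 ->
    (forall z, A z -> U1 z \/ U2 z) -> (forall z, A z -> U1 z -> U2 z -> False) ->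
    (U1 p <-> U1 q).

Section Linked.

Variables (P : PathLinkage) (A : placement -> Prop).

Lemma linked_trans p q s : linked P A p q -> linked P A q s -> linked P A p s.
Proof.
  intros (Hp & _ & H1) (_ & Hs & H2). repeat split; auto.
  - intros Hu. apply (H2 U1 U2); auto. now apply (H1 U1 U2).
  - intros Hu. apply (H1 U1 U2); auto. now apply (H2 U1 U2).
Qed.

Lemma linked_sym p q : linked P A p q -> linked P A q p.
Proof.
  intros (Hp & Hq & H). repeat split; auto; intros; now apply (H U1 U2).
Qed.

Lemma connectedM_of_linked c : (forall p, A p -> linked P A p c) -> connectedM P A.
Proof.
  intros H [U1 [U2 (O1 & O2 & C & [p [Ap Up]] & [q [Aq Uq]] & D)]].
  destruct (H p Ap) as (_ & Ac & H1). destruct (H q Aq) as (_ & _ & H2).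
  apply (D c Ac).
  - now apply (H1 U1 U2).
  - destruct (C c Ac) as [Hc|Hc]; auto. exfalso. apply (D q Aq); auto. now apply (H2 U1 U2).
Qed.

(* Symmetry of the hypotheses in [U1], [U2] reduces [linked] to one implication. *)
Lemma linked_intro p q :
  A p -> A q ->
  (forall U1 U2, openM P U1 -> openM P U2 ->
    (forall z, A z -> U1 z \/ U2 z) -> (forall z, A z -> U1 z -> U2 z -> False) ->
    U1 p -> U1 q) -> linked P A p q.
Proof.
  intros Hp Hq H. split; [|split]; auto.
  intros U1 U2 O1 O2 C D. split; [now apply (H U1 U2)|].
  intros Hu1. destruct (C p Hp) as [Hu2|Hu2]; auto.
  exfalso. apply (D q Hq Hu1). apply (H U2 U1); auto.
  - intros z Az. destruct (C z Az); auto.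
  - intros z Az H2 H1. exact (D z Az H1 H2).
Qed.

Hypothesis A_config : forall z, A z -> config P z.

Lemma linked_equiv p q : A p -> A q -> equivP P p q -> linked P A p q.
Proof.
  intros Hp Hq He. apply linked_intro; auto.
  intros U1 U2 [[_ Hsat] _] _ _ _ Hu. now apply (Hsat p q); auto.
Qed.

End Linked.

Definition open01 (S : R -> Prop) : Prop :=
  forall t, 0 <= t <= 1 -> S t ->
    exists d, d > 0 /\ forall t', 0 <= t' <= 1 -> Rabs (t' - t) < d -> S t'.

Lemma unit_interval_connected (S1 S2 : R -> Prop) :
  (forall t, 0 <= t <= 1 -> S1 t \/ S2 t) ->
  (forall t, 0 <= t <= 1 -> S1 t -> S2 t -> False) ->
  open01 S1 -> open01 S2 -> S1 0 -> S1 1.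
Proof.
  intros C D O1 O2 H0.
  set (E := fun t => 0 <= t <= 1 /\ forall t', 0 <= t' <= t -> S1 t').
  assert (E0 : E 0) by (split; [lra|]; intros t' Ht'; now replace t' with 0 by lra).
  assert (Eb : bound E) by (exists 1; intros t [Ht _]; lra).
  destruct (completeness E Eb (ex_intro _ 0 E0)) as [s [Hub Hlub]].
  assert (Hs : 0 <= s <= 1) by (split; [now apply Hub | apply Hlub; intros t [Ht _]; lra]).
  assert (Hbelow : forall t, 0 <= t < s -> S1 t).
  { intros t Ht. destruct (classic (exists u, E u /\ t < u)) as [[u [[_ Eu] Hu]]|Hn].
    - apply Eu; lra.
    - exfalso. enough (s <= t) by lra. apply Hlub. intros u Eu.
      destruct (Rle_lt_dec u t); auto. exfalso; eauto. }
  destruct (C s Hs) as [Hs1|Hs2].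
  - destruct (Rle_lt_dec 1 s) as [H1|H1]; [now replace 1 with s by lra|].
    destruct (O1 s Hs Hs1) as [d [Hd Hnear]].
    set (t1 := Rmin 1 (s + d / 2)).
    assert (Ht1 : s < t1 <= 1) by (unfold t1; apply Rmin_case_strong; intros; lra).
    enough (E t1) by (assert (t1 <= s) by (apply Hub; assumption); lra).
    split; [lra|]. intros t' Ht'. destruct (Rlt_le_dec t' s); [apply Hbelow; lra|].
    apply Hnear; [lra|]. rewrite Rabs_right by lra.
    revert Ht'; unfold t1; apply Rmin_case_strong; intros; lra.
  - assert (s <> 0) by (intros ->; exact (D 0 ltac:(lra) H0 Hs2)).
    destruct (O2 s Hs Hs2) as [d [Hd Hnear]].
    set (t1 := Rmax 0 (s - d / 2)).
    assert (Ht1 : 0 <= t1 < s) by (unfold t1; apply Rmax_case_strong; intros; lra).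
    exfalso. apply (D t1); [lra | apply Hbelow; lra |].
    apply Hnear; [lra|]. rewrite Rabs_left1 by lra.
    unfold t1; apply Rmax_case_strong; intros; lra.
Qed.

Definition cont_point (F : R -> point) (t : R) : Prop :=
  continuity_pt (fun s => fst (F s)) t /\ continuity_pt (fun s => snd (F s)) t.

Lemma cont_point_dist F t : cont_point F t -> forall e, e > 0 -> exists d, d > 0 /\
  forall t', Rabs (t' - t) < d -> dist2 (F t) (F t') < e.
Proof.
  intros [C1 C2] e He.
  destruct (C1 (e / 2)) as [d1 [Hd1 D1]]; [lra|].
  destruct (C2 (e / 2)) as [d2 [Hd2 D2]]; [lra|].
  exists (Rmin d1 d2). split; [now apply Rmin_case|].
  intros t' Ht'. eapply Rle_lt_trans; [apply dist2_le_abs|].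
  destruct (Req_dec t t') as [<-|Hne].
  { rewrite !Rminus_diag, Rabs_R0; lra. }
  assert (Rabs (t' - t) < d1) by (eapply Rlt_le_trans; [exact Ht'|apply Rmin_l]).
  assert (Rabs (t' - t) < d2) by (eapply Rlt_le_trans; [exact Ht'|apply Rmin_r]).
  specialize (D1 t' (conj (conj I Hne) H)). specialize (D2 t' (conj (conj I Hne) H0)).
  simpl in D1, D2. unfold R_dist in D1, D2.
  rewrite (Rabs_minus_sym (fst (F t))), (Rabs_minus_sym (snd (F t))). lra.
Qed.

Definition mkpl (q1 q2 q3 q4 q5 : point) : placement :=
  fun i => match i with
           | 1%nat => q1 | 2%nat => q2 | 3%nat => q3 | 4%nat => q4 | _ => q5 end.

Section Paths.

Variables (P : PathLinkage) (A : placement -> Prop).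
Hypothesis A_config : forall z, A z -> config P z.

Lemma linked_of_path (g : R -> placement) :
  (forall t, 0 <= t <= 1 -> A (g t)) ->
  (forall t, 0 <= t <= 1 -> forall e, e > 0 -> exists d, d > 0 /\
     forall t', 0 <= t' <= 1 -> Rabs (t' - t) < d -> vdist_le P (g t) (g t') e) ->
  linked P A (g 0) (g 1).
Proof.
  intros HgA Hg. apply linked_intro; try (apply HgA; lra).
  intros U1 U2 [_ O1] [_ O2] C D H0.
  assert (Hopen : forall U, (forall p, U p -> exists e, e > 0 /\
                     forall q, config P q -> vdist_le P p q e -> U q) ->
                  open01 (fun t => U (g t))).
  { intros U OU t Ht Hu. destruct (OU _ Hu) as [e [He Hq]].
    destruct (Hg t Ht e He) as [d [Hd Hd']].
    exists d; split; auto. }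
  apply (unit_interval_connected (fun t => U1 (g t)) (fun t => U2 (g t))); auto.
  intros t Ht. now apply D, HgA.
Qed.

Lemma linked_of_path5 (F1 F2 F3 F4 F5 : R -> point) :
  pl_k P = 4%nat ->
  (forall t, 0 <= t <= 1 -> A (mkpl (F1 t) (F2 t) (F3 t) (F4 t) (F5 t))) ->
  (forall t, 0 <= t <= 1 ->
     cont_point F1 t /\ cont_point F2 t /\ cont_point F3 t /\ cont_point F4 t /\ cont_point F5 t) ->
  linked P A (mkpl (F1 0) (F2 0) (F3 0) (F4 0) (F5 0)) (mkpl (F1 1) (F2 1) (F3 1) (F4 1) (F5 1)).
Proof.
  intros HP HF HC.
  apply (linked_of_path (fun t => mkpl (F1 t) (F2 t) (F3 t) (F4 t) (F5 t))); auto.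
  intros t Ht e He. destruct (HC t Ht) as (C1 & C2 & C3 & C4 & C5).
  destruct (cont_point_dist _ _ C1 e He) as [d1 [P1 E1]].
  destruct (cont_point_dist _ _ C2 e He) as [d2 [P2 E2]].
  destruct (cont_point_dist _ _ C3 e He) as [d3 [P3 E3]].
  destruct (cont_point_dist _ _ C4 e He) as [d4 [P4 E4]].
  destruct (cont_point_dist _ _ C5 e He) as [d5 [P5 E5]].
  set (d := Rmin d1 (Rmin d2 (Rmin d3 (Rmin d4 d5)))).
  assert (Hd : d <= d1 /\ d <= d2 /\ d <= d3 /\ d <= d4 /\ d <= d5).
  { pose proof (Rmin_l d1 (Rmin d2 (Rmin d3 (Rmin d4 d5)))).
    pose proof (Rmin_r d1 (Rmin d2 (Rmin d3 (Rmin d4 d5)))).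
    pose proof (Rmin_l d2 (Rmin d3 (Rmin d4 d5))). pose proof (Rmin_r d2 (Rmin d3 (Rmin d4 d5))).
    pose proof (Rmin_l d3 (Rmin d4 d5)). pose proof (Rmin_r d3 (Rmin d4 d5)).
    pose proof (Rmin_l d4 d5). pose proof (Rmin_r d4 d5). unfold d; lra. }
  exists d. split; [unfold d; repeat (apply Rmin_case; try lra)|].
  intros t' _ Ht' i Hi. rewrite HP in Hi.
  destruct i as [|[|[|[|[|[|i]]]]]]; try lia; cbn beta iota delta [mkpl];
    [apply E1 | apply E2 | apply E3 | apply E4 | apply E5]; lra.
Qed.

End Paths.

Lemma cp_const c t : continuity_pt (fun _ => c) t.
Proof. now apply continuity_pt_const. Qed.
Lemma cp_id t : continuity_pt (fun s => s) t.
Proof. apply derivable_continuous_pt, derivable_pt_id. Qed.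
Lemma cp_plus f g t :
  continuity_pt f t -> continuity_pt g t -> continuity_pt (fun s => f s + g s) t.
Proof. apply continuity_pt_plus. Qed.
Lemma cp_minus f g t :
  continuity_pt f t -> continuity_pt g t -> continuity_pt (fun s => f s - g s) t.
Proof. apply continuity_pt_minus. Qed.
Lemma cp_mult f g t :
  continuity_pt f t -> continuity_pt g t -> continuity_pt (fun s => f s * g s) t.
Proof. apply continuity_pt_mult. Qed.
Lemma cp_opp f t : continuity_pt f t -> continuity_pt (fun s => - f s) t.
Proof. apply continuity_pt_opp. Qed.
Lemma cp_pow2 f t : continuity_pt f t -> continuity_pt (fun s => f s ^ 2) t.
Proof.
  intros. apply (continuity_pt_locally_ext (fun s => f s * f s) _ 1); [lra| intros; ring |].
  now apply cp_mult.
Qed.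
Lemma cp_inv f t : continuity_pt f t -> f t <> 0 -> continuity_pt (fun s => / f s) t.
Proof. apply continuity_pt_inv. Qed.
Lemma cp_div f g t :
  continuity_pt f t -> continuity_pt g t -> g t <> 0 -> continuity_pt (fun s => f s / g s) t.
Proof. apply continuity_pt_div. Qed.
Lemma cp_cos f t : continuity_pt f t -> continuity_pt (fun s => cos (f s)) t.
Proof. intros; apply (continuity_pt_comp f cos); auto. apply continuity_cos. Qed.
Lemma cp_sin f t : continuity_pt f t -> continuity_pt (fun s => sin (f s)) t.
Proof. intros; apply (continuity_pt_comp f sin); auto. apply continuity_sin. Qed.
Lemma cp_sqrt f t : continuity_pt f t -> 0 <= f t -> continuity_pt (fun s => sqrt (f s)) t.
Proof. intros; apply (continuity_pt_comp f sqrt); auto. now apply continuity_pt_sqrt. Qed.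

(* Leaves the side conditions of [cp_div], [cp_inv] and [cp_sqrt] that are not hypotheses. *)
Ltac continuity_pt_tac := repeat first
  [ apply cp_const | apply cp_id | apply cp_plus | apply cp_minus | apply cp_mult
  | apply cp_opp | apply cp_pow2 | apply cp_cos | apply cp_sin | apply cp_div
  | apply cp_inv | apply cp_sqrt | assumption
  | match goal with H : forall t, continuity_pt _ t |- _ => apply H end ].

(** * The linkage with edge lengths L, r, r, r *)

Definition chain4 (L r : R) : PathLinkage :=
  mkPL 4 (fun i => match i with 1%nat => L | _ => r end).

Lemma fibre_config P x p : fibre P x p -> config P p.
Proof. now intros []. Qed.

Lemma fibre_chain4 L r x p : fibre (chain4 L r) x p <->
  dist2 (p 1%nat) (p 2%nat) = L /\ dist2 (p 2%nat) (p 3%nat) = r /\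
  dist2 (p 3%nat) (p 4%nat) = r /\ dist2 (p 4%nat) (p 5%nat) = r /\
  dist2 (p 1%nat) (p 5%nat) = x.
Proof.
  split.
  - intros [Hc Ht]. repeat split; auto;
      [apply (Hc 1%nat) | apply (Hc 2%nat) | apply (Hc 3%nat) | apply (Hc 4%nat)]; simpl; lia.
  - intros (H1 & H2 & H3 & H4 & H5). split; auto.
    intros i Hi. simpl in Hi. destruct i as [|[|[|[|[|i]]]]]; try lia; assumption.
Qed.

Lemma fibre_chain4_bounds L r x p : fibre (chain4 L r) x p -> L - 3 * r <= x <= L + 3 * r.
Proof.
  intros Hp. apply fibre_chain4 in Hp as (D12 & D23 & D34 & D45 & D15).
  pose proof (dist2_triangle (p 1%nat) (p 2%nat) (p 5%nat)).
  pose proof (dist2_triangle (p 2%nat) (p 3%nat) (p 5%nat)).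
  pose proof (dist2_triangle (p 3%nat) (p 4%nat) (p 5%nat)).
  pose proof (dist2_triangle (p 1%nat) (p 5%nat) (p 2%nat)).
  rewrite (dist2_sym (p 5%nat) (p 2%nat)) in *. lra.
Qed.

Definition frame (o e z : point) : point :=
  (fst e * (fst z - fst o) + snd e * (snd z - snd o),
   - snd e * (fst z - fst o) + fst e * (snd z - snd o)).

Lemma frame_or_isometry o e : norm2 e = 1 -> or_isometry (frame o e).
Proof.
  unfold norm2. intros He. split.
  - intros u v. unfold dist2, frame; cbn [fst snd]. f_equal.
    transitivity ((fst e ^ 2 + snd e ^ 2) * ((fst u - fst v) ^ 2 + (snd u - snd v) ^ 2)); [ring|].
    rewrite He; ring.
  - intros u v w. unfold cross, frame; cbn [fst snd].
    transitivity ((fst e ^ 2 + snd e ^ 2) *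
      ((fst v - fst u) * (snd w - snd u) - (snd v - snd u) * (fst w - fst u))); [ring|].
    rewrite He; ring.
Qed.

Lemma normalize_pair u v : exists g, or_isometry g /\ g u = (0, 0) /\ g v = (dist2 u v, 0).
Proof.
  set (d := dist2 u v). assert (Hd : sqd u v = d ^ 2) by now apply sqd_of_dist2.
  destruct (Req_dec d 0) as [Z|NZ].
  - assert (u = v) by (apply dist2_eq0; exact Z). subst v.
    exists (frame u (1, 0)). split; [apply frame_or_isometry; unfold norm2; simpl; ring|].
    rewrite Z. unfold frame; cbn [fst snd]. split; f_equal; ring.
  - exists (frame u ((fst v - fst u) / d, (snd v - snd u) / d)). unfold sqd in Hd. split.
    + apply frame_or_isometry. unfold norm2; cbn [fst snd].
      transitivity (((fst u - fst v) ^ 2 + (snd u - snd v) ^ 2) / d ^ 2); [field; auto|].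
      rewrite Hd; field; auto.
    + unfold frame; cbn [fst snd]. split; f_equal; try (field; auto).
      transitivity (((fst u - fst v) ^ 2 + (snd u - snd v) ^ 2) / d); [field; auto|].
      rewrite Hd; field; auto.
Qed.

Lemma fibre_isometry P x p g : or_isometry g -> fibre P x p -> fibre P x (fun i => g (p i)).
Proof.
  intros [Hg _] [Hc Ht]. split.
  - intros i Hi. rewrite Hg. now apply Hc.
  - unfold theta. now rewrite Hg.
Qed.

Lemma equivP_isometry P p g : or_isometry g -> equivP P p (fun i => g (p i)).
Proof. intros Hg. now exists g. Qed.

Lemma equivP_agree P p q : (forall i, (1 <= i <= S (pl_k P))%nat -> q i = p i) -> equivP P p q.
Proof.
  intros H. exists (fun z => z). split; [split; reflexivity|]. exact H.
Qed.

(* The point at distance [L] from the origin and [x] from [w], on the left of the ray from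
   the origin through [w] when [sg = 1] and on its right when [sg = -1]. *)
Definition apex (L x : R) (w : point) (sg : R) : point :=
  let n := norm2 w in
  let c := (L ^ 2 - x ^ 2 + n) / (2 * n) in
  let k := sg * sqrt (4 * L ^ 2 * n - (L ^ 2 - x ^ 2 + n) ^ 2) / (2 * n) in
  (c * fst w - k * snd w, c * snd w + k * fst w).

Section Apex.

Variables (L x : R).

Lemma apex_discriminant n :
  4 * L ^ 2 * n - (L ^ 2 - x ^ 2 + n) ^ 2 = (n - (L - x) ^ 2) * ((L + x) ^ 2 - n).
Proof. ring. Qed.

Lemma apex_dist w sg : sg ^ 2 = 1 -> 0 < norm2 w -> (L - x) ^ 2 <= norm2 w <= (L + x) ^ 2 ->
  sqd (apex L x w sg) (0, 0) = L ^ 2 /\ sqd (apex L x w sg) w = x ^ 2.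
Proof.
  destruct w as [w1 w2]. unfold apex, norm2, sqd; cbn [fst snd]. intros Hsg Hn Hm.
  set (n := w1 ^ 2 + w2 ^ 2) in *.
  set (G := 4 * L ^ 2 * n - (L ^ 2 - x ^ 2 + n) ^ 2).
  assert (HG : 0 <= G) by (unfold G; rewrite apex_discriminant; apply Rmult_le_pos; lra).
  pose proof (pow2_sqrt G HG) as HS. set (D := sqrt G) in *.
  assert (n <> 0) by lra.
  split.
  - transitivity (((L ^ 2 - x ^ 2 + n) ^ 2 + sg ^ 2 * D ^ 2) / (4 * n ^ 2) * n);
      [unfold n; field; fold n; auto|].
    rewrite Hsg, HS. unfold G. field. auto.
  - transitivity (((L ^ 2 - x ^ 2 - n) ^ 2 + sg ^ 2 * D ^ 2) / (4 * n ^ 2) * n);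
      [unfold n; field; fold n; auto|].
    rewrite Hsg, HS. unfold G. field. auto.
Qed.

Lemma apex_cases q w : 0 < norm2 w -> sqd q (0, 0) = L ^ 2 -> sqd q w = x ^ 2 ->
  q = apex L x w 1 \/ q = apex L x w (-1).
Proof.
  destruct w as [w1 w2], q as [q1 q2]. unfold apex, norm2, sqd; cbn [fst snd].
  intros Hn H1 H2.
  set (n := w1 ^ 2 + w2 ^ 2) in *.
  (* the coordinates of q along w and along w rotated by a right angle *)
  set (dw := q1 * w1 + q2 * w2). set (dj := - q1 * w2 + q2 * w1).
  assert (Hdw : L ^ 2 - x ^ 2 + n = 2 * dw) by (unfold dw, n; nra).
  assert (HG : 4 * L ^ 2 * n - (L ^ 2 - x ^ 2 + n) ^ 2 = (2 * dj) ^ 2).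
  { rewrite Hdw. replace (L ^ 2) with (q1 ^ 2 + q2 ^ 2) by (rewrite <- H1; ring).
    unfold dw, dj, n. ring. }
  assert (n <> 0) by lra.
  rewrite HG, Hdw, <- Rsqr_pow2, sqrt_Rsqr_abs.
  destruct (Rle_lt_dec 0 (2 * dj)); [left; rewrite Rabs_right by lra
                                    | right; rewrite Rabs_left by lra];
    f_equal; apply (Rmult_eq_reg_l n); auto; unfold dw, dj, n; field; auto.
Qed.

Lemma apex_sign_irrelevant w sg sg' : norm2 w = (L - x) ^ 2 -> apex L x w sg = apex L x w sg'.
Proof.
  intros H. unfold apex. rewrite apex_discriminant, H.
  replace ((L - x) ^ 2 - (L - x) ^ 2) with 0 by ring.
  rewrite Rmult_0_l, sqrt_0. f_equal; unfold Rdiv; ring.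
Qed.

Lemma apex_cont (w : R -> point) sg t :
  cont_point w t -> 0 < norm2 (w t) -> (L - x) ^ 2 <= norm2 (w t) <= (L + x) ^ 2 ->
  cont_point (fun s => apex L x (w s) sg) t.
Proof.
  unfold apex, norm2, cont_point. intros [C1 C2] Hn Hm.
  assert (0 <= 4 * L ^ 2 * (fst (w t) ^ 2 + snd (w t) ^ 2)
               - (L ^ 2 - x ^ 2 + (fst (w t) ^ 2 + snd (w t) ^ 2)) ^ 2)
    by (rewrite apex_discriminant; apply Rmult_le_pos; lra).
  cbn [fst snd]. split; continuity_pt_tac; lra.
Qed.

End Apex.

(** * Arm configurations *)

(* With p2 = 0 and p3 = (r, 0), the link p3 p4 has direction 2h and the link p4 p5 direction
   h + y: in these angles |p5| depends on cos h and cos y only ([norm2_tip]). *)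
Definition knee (r h : R) : point := (r + r * cos (2 * h), r * sin (2 * h)).

Definition tip (r h y : R) : point :=
  (r + r * cos (2 * h) + r * cos (h + y), r * sin (2 * h) + r * sin (h + y)).

Lemma norm2_tip r h y : norm2 (tip r h y) = r ^ 2 * (1 + 4 * cos h ^ 2 + 4 * cos h * cos y).
Proof.
  unfold norm2, tip; cbn [fst snd].
  transitivity (r ^ 2 * (1 + (sin (2 * h) ^ 2 + cos (2 * h) ^ 2)
    + (sin (h + y) ^ 2 + cos (h + y) ^ 2)
    + 2 * cos (2 * h) + 2 * cos (h + y) + 2 * cos (2 * h - (h + y)))); [rewrite cos_minus; ring|].
  rewrite !sin2_cos2_pow. replace (2 * h - (h + y)) with (h - y) by ring.
  rewrite cos_2a_cos, cos_plus, cos_minus. ring.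
Qed.

Lemma norm2_tip_le r h y : norm2 (tip r h y) <= 9 * r ^ 2.
Proof.
  rewrite norm2_tip. pose proof (COS_bound h). pose proof (COS_bound y).
  assert (1 + 4 * cos h ^ 2 + 4 * cos h * cos y <= 9) by nra.
  pose proof (pow2_ge_0 r). nra.
Qed.

Lemma knee_dist r h : 0 <= r -> dist2 (r, 0) (knee r h) = r.
Proof.
  intros Hr. apply dist2_of_sqd; auto. unfold sqd, knee; cbn [fst snd].
  transitivity (r ^ 2 * (sin (2 * h) ^ 2 + cos (2 * h) ^ 2)); [ring|]. rewrite sin2_cos2_pow; ring.
Qed.

Lemma knee_tip_dist r h y : 0 <= r -> dist2 (knee r h) (tip r h y) = r.
Proof.
  intros Hr. apply dist2_of_sqd; auto. unfold sqd, knee, tip; cbn [fst snd].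
  transitivity (r ^ 2 * (sin (h + y) ^ 2 + cos (h + y) ^ 2)); [ring|]. rewrite sin2_cos2_pow; ring.
Qed.

Definition arm_config (L r x sg h y : R) : placement :=
  mkpl (apex L x (tip r h y) sg) (0, 0) (r, 0) (knee r h) (tip r h y).

Lemma tip_norm_attained r m : 0 < r -> 0 <= m <= 3 * r ->
  exists h y, Rabs h <= PI / 2 /\ Rabs y <= PI /\ norm2 (tip r h y) = m ^ 2.
Proof.
  intros Hr Hm. pose proof PI_RGT_0.
  destruct (Rle_lt_dec r m).
  - (* a straight last link, |tip| = r (1 + 2 cos h) *)
    set (c := (m / r - 1) / 2).
    assert (Hc : 0 <= c <= 1) by (unfold c; split;
      apply Rmult_le_reg_l with (2 * r); try lra; field_simplify; lra).
    destruct (acos_nonneg_spec c Hc) as [Hh Hcos].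
    exists (acos c), 0. rewrite Rabs_R0, norm2_tip, Hcos, cos_0. repeat split; try lra.
    unfold c. field. lra.
  - (* a folded last link, |tip| = r (2 cos h - 1) *)
    set (c := (1 + m / r) / 2).
    assert (Hc : 0 <= c <= 1) by (unfold c; split;
      apply Rmult_le_reg_l with (2 * r); try lra; field_simplify; lra).
    destruct (acos_nonneg_spec c Hc) as [Hh Hcos].
    exists (acos c), PI. rewrite (Rabs_right PI), norm2_tip, Hcos, cos_PI by lra.
    repeat split; try lra.
    unfold c. field. lra.
Qed.

Section Arm.

Variables L r x : R.
Hypothesis r_pos : 0 < r.
Hypothesis r_le : 3 * r <= L.
Hypothesis x_range : L - 3 * r <= x <= L + 3 * r.

Local Notation Q := (chain4 L r).
Local Notation F := (fibre (chain4 L r) x).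

Lemma arm_config_fibre sg h y : sg ^ 2 = 1 ->
  0 < norm2 (tip r h y) -> (L - x) ^ 2 <= norm2 (tip r h y) -> F (arm_config L r x sg h y).
Proof.
  intros Hsg Hn Hm.
  assert (norm2 (tip r h y) <= (L + x) ^ 2) by (pose proof (norm2_tip_le r h y); nra).
  destruct (apex_dist L x (tip r h y) sg) as [E1 E2]; auto.
  apply fibre_chain4; unfold arm_config, mkpl. repeat split.
  - apply dist2_of_sqd; [lra | exact E1].
  - apply dist2_of_sqd; [lra|]. unfold sqd; cbn [fst snd]; ring.
  - apply knee_dist; lra.
  - apply knee_tip_dist; lra.
  - apply dist2_of_sqd; [lra | exact E2].
Qed.

Lemma linked_arm_path sg (h y : R -> R) : sg ^ 2 = 1 ->
  (forall t, continuity_pt h t) -> (forall t, continuity_pt y t) ->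
  (forall t, 0 <= t <= 1 ->
     0 < norm2 (tip r (h t) (y t)) /\ (L - x) ^ 2 <= norm2 (tip r (h t) (y t))) ->
  linked Q F (arm_config L r x sg (h 0) (y 0)) (arm_config L r x sg (h 1) (y 1)).
Proof.
  intros Hsg Ch Cy Hn.
  apply (linked_of_path5 Q F (@fibre_config _ _) (fun s => apex L x (tip r (h s) (y s)) sg)
    (fun _ => (0, 0)) (fun _ => (r, 0)) (fun s => knee r (h s)) (fun s => tip r (h s) (y s)));
    auto.
  - intros t Ht. destruct (Hn t Ht). now apply arm_config_fibre.
  - intros t Ht. destruct (Hn t Ht).
    assert (Ctip : cont_point (fun s => tip r (h s) (y s)) t)
      by (unfold tip; split; cbn [fst snd]; continuity_pt_tac).
    assert (norm2 (tip r (h t) (y t)) <= (L + x) ^ 2)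
      by (pose proof (norm2_tip_le r (h t) (y t)); nra).
    split; [|split; [|split; [|split]]]; try (split; apply cp_const).
    + apply (apex_cont L x (fun s => tip r (h s) (y s))); auto; lra.
    + unfold knee; split; cbn [fst snd]; continuity_pt_tac.
    + exact Ctip.
Qed.

Lemma linked_arm_straighten sg h y : sg ^ 2 = 1 -> Rabs h <= PI / 2 -> Rabs y <= PI ->
  0 < norm2 (tip r h y) -> (L - x) ^ 2 <= norm2 (tip r h y) ->
  linked Q F (arm_config L r x sg h y) (arm_config L r x sg 0 0).
Proof.
  intros Hsg Hh Hy Hn Hm. pose proof PI_RGT_0. pose proof (pow2_ge_0 r).
  assert (Hc : 0 <= cos h) by now apply cos_ge0_of_abs_le.
  assert (Hshrink : forall z t, 0 <= t <= 1 -> Rabs ((1 - t) * z) <= Rabs z).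
  { intros z t Ht. rewrite Rabs_mult, (Rabs_right (1 - t)) by lra. pose proof (Rabs_pos z). nra. }
  (* |tip| only grows when the angle y and then the angle h are shrunk to 0 *)
  apply linked_trans with (arm_config L r x sg h 0).
  - pose proof (linked_arm_path sg (fun _ => h) (fun t => (1 - t) * y) Hsg) as E.
    cbn beta in E. rewrite Rminus_0_r, Rmult_1_l, Rminus_diag, Rmult_0_l in E.
    apply E; intros; try continuity_pt_tac.
    enough (norm2 (tip r h y) <= norm2 (tip r h ((1 - t) * y))) by lra.
    rewrite !norm2_tip.
    assert (cos y <= cos ((1 - t) * y)) by (apply cos_le_of_abs_le; auto; lra).
    apply Rmult_le_compat_l; nra.
  - pose proof (linked_arm_path sg (fun t => (1 - t) * h) (fun _ => 0) Hsg) as E.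
    cbn beta in E. rewrite Rminus_0_r, Rmult_1_l, Rminus_diag, Rmult_0_l in E.
    apply E; intros; try continuity_pt_tac.
    enough (norm2 (tip r h y) <= norm2 (tip r ((1 - t) * h) 0)) by lra.
    rewrite !norm2_tip, cos_0.
    assert (cos h <= cos ((1 - t) * h)) by (apply cos_le_of_abs_le; auto; lra).
    pose proof (COS_bound y). apply Rmult_le_compat_l; nra.
Qed.

Lemma linked_arm_flip_off_centre : x <> L ->
  linked Q F (arm_config L r x 1 0 0) (arm_config L r x (-1) 0 0).
Proof.
  intros Hx.
  destruct (tip_norm_attained r (Rabs (L - x))) as [h [y (Hh & Hy & Hn)]]; auto.
  { split; [apply Rabs_pos | apply Rabs_le; lra]. }
  rewrite pow2_abs in Hn.
  assert (0 < (L - x) ^ 2) by (rewrite <- Rsqr_pow2; apply Rsqr_pos_lt; lra).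
  apply linked_trans with (arm_config L r x 1 h y).
  { apply linked_sym, linked_arm_straighten; auto; try ring; lra. }
  replace (arm_config L r x 1 h y) with (arm_config L r x (-1) h y)
    by (unfold arm_config; now rewrite (apex_sign_irrelevant L x _ (-1) 1 Hn)).
  apply linked_arm_straighten; auto; try ring; lra.
Qed.

End Arm.

Lemma tip_PI r h : tip r h PI = (r * cos h * (2 * cos h - 1), r * sin h * (2 * cos h - 1)).
Proof. unfold tip. rewrite cos_2a_cos, sin_2a, neg_cos, neg_sin. f_equal; ring. Qed.

Lemma norm2_tip_PI r h : norm2 (tip r h PI) = r ^ 2 * (2 * cos h - 1) ^ 2.
Proof. rewrite norm2_tip, cos_PI. ring. Qed.

Lemma tip_0_PI r : tip r 0 PI = (r, 0).
Proof. rewrite tip_PI, cos_0, sin_0. f_equal; ring. Qed.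

Lemma tip_PI2_PI r : tip r (PI / 2) PI = (0, - r).
Proof. rewrite tip_PI, cos_PI2, sin_PI2. f_equal; ring. Qed.

Lemma sqrt_scale c u : 0 <= c -> sqrt (c ^ 2 * u) = c * sqrt u.
Proof. intros Hc. rewrite sqrt_mult_alt by apply pow2_ge_0. now rewrite sqrt_pow2. Qed.

(* For h from 0 to pi/2 the tip passes through the origin (at h = pi/3) while the apex stays on
   the perpendicular bisector of the origin and the tip: this carries the apex from the left of
   the tip to its right. *)
Definition bend_apex (L r h : R) : point :=
  let w := tip r h PI in
  let d := sqrt (L ^ 2 - norm2 w / 4) in
  (fst w / 2 - d * sin h, snd w / 2 + d * cos h).

Definition bend_config (L r h : R) : placement :=
  mkpl (bend_apex L r h) (0, 0) (r, 0) (knee r h) (tip r h PI).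

Section Bend.

Variables L r : R.
Hypothesis r_pos : 0 < r.
Hypothesis r_le : 3 * r <= L.

Local Notation F := (fibre (chain4 L r) L).

Lemma bend_radicand_ge0 h : 0 <= h <= PI / 2 -> 0 <= L ^ 2 - norm2 (tip r h PI) / 4.
Proof.
  intros Hh. rewrite norm2_tip_PI.
  assert (0 <= cos h <= 1) by (split; [apply cos_ge_0; lra | apply COS_bound]).
  assert ((2 * cos h - 1) ^ 2 <= 1) by nra. pose proof (pow2_ge_0 r). nra.
Qed.

Lemma bend_config_fibre h : 0 <= h <= PI / 2 -> F (bend_config L r h).
Proof.
  intros Hh. pose proof (pow2_sqrt _ (bend_radicand_ge0 h Hh)) as ES.
  set (d := sqrt (L ^ 2 - norm2 (tip r h PI) / 4)) in *.
  rewrite tip_PI in *. unfold norm2 in ES; cbn [fst snd] in ES.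
  set (w1 := r * cos h * (2 * cos h - 1)) in *. set (w2 := r * sin h * (2 * cos h - 1)) in *.
  assert (Hperp : - w1 * sin h + w2 * cos h = 0) by (unfold w1, w2; ring).
  pose proof (sin2_cos2_pow h).
  apply fibre_chain4; unfold bend_config, mkpl, bend_apex; fold d; rewrite tip_PI; fold w1 w2;
    cbn [fst snd]. repeat split.
  - apply dist2_of_sqd; [lra|]. unfold sqd; cbn [fst snd]. clearbody d w1 w2.
    transitivity ((w1 ^ 2 + w2 ^ 2) / 4 + d * (- w1 * sin h + w2 * cos h)
                  + d ^ 2 * (sin h ^ 2 + cos h ^ 2)); [field|].
    rewrite Hperp, ES, H. field.
  - apply dist2_of_sqd; [lra|]. unfold sqd; cbn [fst snd]; ring.
  - apply knee_dist; lra.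
  - unfold w1, w2. rewrite <- tip_PI. apply knee_tip_dist; lra.
  - apply dist2_of_sqd; [lra|]. unfold sqd; cbn [fst snd]. clearbody d w1 w2.
    transitivity ((w1 ^ 2 + w2 ^ 2) / 4 - d * (- w1 * sin h + w2 * cos h)
                  + d ^ 2 * (sin h ^ 2 + cos h ^ 2)); [field|].
    rewrite Hperp, ES, H. field.
Qed.

Lemma bend_apex_start : bend_apex L r 0 = apex L L (tip r 0 PI) 1.
Proof.
  unfold bend_apex, apex. rewrite tip_0_PI, cos_0, sin_0. unfold norm2; cbn [fst snd].
  replace (4 * L ^ 2 * (r ^ 2 + 0 ^ 2) - (L ^ 2 - L ^ 2 + (r ^ 2 + 0 ^ 2)) ^ 2)
    with ((2 * r) ^ 2 * (L ^ 2 - (r ^ 2 + 0 ^ 2) / 4)) by field.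
  rewrite sqrt_scale by lra. f_equal; field; lra.
Qed.

Lemma bend_apex_end : bend_apex L r (PI / 2) = apex L L (tip r (PI / 2) PI) (-1).
Proof.
  unfold bend_apex, apex. rewrite tip_PI2_PI, cos_PI2, sin_PI2. unfold norm2; cbn [fst snd].
  replace (4 * L ^ 2 * (0 ^ 2 + (- r) ^ 2) - (L ^ 2 - L ^ 2 + (0 ^ 2 + (- r) ^ 2)) ^ 2)
    with ((2 * r) ^ 2 * (L ^ 2 - (0 ^ 2 + (- r) ^ 2) / 4)) by field.
  rewrite sqrt_scale by lra. f_equal; field; lra.
Qed.

Lemma linked_bend : linked (chain4 L r) F (bend_config L r 0) (bend_config L r (PI / 2)).
Proof.
  pose proof PI_RGT_0.
  pose proof (linked_of_path5 (chain4 L r) F (@fibre_config _ _)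
    (fun t => bend_apex L r (t * (PI / 2))) (fun _ => (0, 0)) (fun _ => (r, 0))
    (fun t => knee r (t * (PI / 2))) (fun t => tip r (t * (PI / 2)) PI) eq_refl) as E.
  cbn beta in E. rewrite Rmult_0_l, Rmult_1_l in E. apply E.
  - intros t Ht. apply bend_config_fibre. nra.
  - intros t Ht. pose proof (bend_radicand_ge0 (t * (PI / 2)) ltac:(nra)).
    unfold bend_apex, knee, tip, cont_point, norm2 in *; cbn [fst snd] in *.
    repeat split; continuity_pt_tac.
Qed.

Lemma linked_arm_flip_centre :
  linked (chain4 L r) F (arm_config L r L 1 0 0) (arm_config L r L (-1) 0 0).
Proof.
  pose proof PI_RGT_0. pose proof (pow2_ge_0 r).
  apply linked_trans with (arm_config L r L 1 0 PI).
  { apply linked_sym, linked_arm_straighten; try ring; try lra;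
      rewrite ?Rabs_R0, ?Rabs_right, ?norm2_tip_PI, ?cos_0; nra. }
  replace (arm_config L r L 1 0 PI) with (bend_config L r 0)
    by (unfold arm_config, bend_config; now rewrite bend_apex_start).
  apply linked_trans with (bend_config L r (PI / 2)); [apply linked_bend|].
  replace (bend_config L r (PI / 2)) with (arm_config L r L (-1) (PI / 2) PI)
    by (unfold arm_config, bend_config; now rewrite bend_apex_end).
  apply linked_arm_straighten; try ring; try lra;
    rewrite ?Rabs_right, ?norm2_tip_PI, ?cos_PI2; nra.
Qed.

End Bend.

Lemma linked_arm_flip L r x : 0 < r -> 3 * r <= L -> L - 3 * r <= x <= L + 3 * r ->
  linked (chain4 L r) (fibre (chain4 L r) x) (arm_config L r x 1 0 0) (arm_config L r x (-1) 0 0).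
Proof.
  intros. destruct (Req_dec x L) as [->|].
  - now apply linked_arm_flip_centre.
  - now apply linked_arm_flip_off_centre.
Qed.

Lemma arm_angles r q4 q5 : 0 < r -> dist2 (r, 0) q4 = r -> dist2 q4 q5 = r ->
  exists h y, Rabs h <= PI / 2 /\ Rabs y <= PI /\ q4 = knee r h /\ q5 = tip r h y.
Proof.
  intros Hr D34 D45. apply sqd_of_dist2 in D34, D45. unfold sqd in D34, D45; cbn [fst snd] in D34.
  destruct (angle_of ((fst q4 - r) / r, snd q4 / r)) as [p [Hp E4]].
  { unfold norm2; cbn [fst snd].
    transitivity (((r - fst q4) ^ 2 + (0 - snd q4) ^ 2) / r ^ 2); [field|rewrite D34; field]; lra. }
  assert (Hh : Rabs (p / 2) <= PI / 2) by (apply Rabs_le; lra).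
  destruct (angle_near ((fst q5 - fst q4) / r, (snd q5 - snd q4) / r) (p / 2)) as [p' [Hp' E5]].
  { unfold norm2; cbn [fst snd].
    transitivity (((fst q4 - fst q5) ^ 2 + (snd q4 - snd q5) ^ 2) / r ^ 2);
      [field | rewrite D45; field]; lra. }
  { pose proof PI_RGT_0; lra. }
  exists (p / 2), (p' - p / 2). repeat split; auto.
  - injection E4 as E4a E4b. unfold knee. replace (2 * (p / 2)) with p by field.
    rewrite <- E4a, <- E4b. destruct q4. cbn [fst snd]. f_equal; field; lra.
  - injection E4 as E4a E4b. injection E5 as E5a E5b. unfold tip.
    replace (2 * (p / 2)) with p by field. replace (p / 2 + (p' - p / 2)) with p' by ring.
    rewrite <- E4a, <- E4b, <- E5a, <- E5b. destruct q4, q5. cbn [fst snd]. f_equal; field; lra.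
Qed.

(** * A tip at the origin *)

Definition circ (L p : R) : point := (L * cos p, L * sin p).

Lemma norm2_circ L p : norm2 (circ L p) = L ^ 2.
Proof.
  unfold norm2, circ; cbn [fst snd].
  transitivity (L ^ 2 * (sin p ^ 2 + cos p ^ 2)); [ring|]. rewrite sin2_cos2_pow. ring.
Qed.

(* The reflection of the origin in the line through [P] and [Q]. *)
Definition reflect_origin (P Q : point) : point :=
  let u := (fst Q - fst P, snd Q - snd P) in
  let mu := - (fst P * fst u + snd P * snd u) / norm2 u in
  (2 * (fst P + mu * fst u), 2 * (snd P + mu * snd u)).

Lemma reflect_origin_dist P Q : sqd Q P <> 0 ->
  sqd (reflect_origin P Q) P = norm2 P /\ sqd (reflect_origin P Q) Q = norm2 Q.
Proof.
  destruct P as [p1 p2], Q as [q1 q2]. unfold reflect_origin, sqd, norm2; cbn [fst snd].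
  intros H. split; field; auto.
Qed.

Lemma norm2_reflect_origin P Q : sqd Q P <> 0 ->
  norm2 (reflect_origin P Q) = 4 * (fst P * snd Q - snd P * fst Q) ^ 2 / sqd Q P.
Proof.
  destruct P as [p1 p2], Q as [q1 q2]. unfold reflect_origin, sqd, norm2; cbn [fst snd].
  intros H. field; auto.
Qed.

Lemma sqd_pos_of_norm2 A B r L : norm2 A = r ^ 2 -> norm2 B = L ^ 2 -> 0 <= r < L -> 0 < sqd A B.
Proof.
  intros HA HB Hr. pose proof (sqd_ge_dist_diff (0, 0) A B).
  rewrite (dist2_origin_of_norm2 A r), (dist2_origin_of_norm2 B L) in H by lra.
  assert (0 < (r - L) ^ 2) by (rewrite <- Rsqr_pow2; apply Rsqr_pos_lt; lra). lra.
Qed.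

Section FoldedTip.

Variables L r : R.
Hypothesis r_pos : 0 < r.
Hypothesis r_le : 3 * r <= L.

Local Notation Q := (chain4 L r).
Local Notation F := (fibre (chain4 L r) L).

Variables (q4 : point) (fs : R).
Hypothesis q4_knee : dist2 (r, 0) q4 = r.
Hypothesis q4_dir : q4 = circ (- r) fs.

Lemma knee_apart p : 0 < sqd q4 (circ L p).
Proof.
  apply (sqd_pos_of_norm2 _ _ r L); [rewrite q4_dir, norm2_circ; ring | apply norm2_circ | lra].
Qed.

Lemma swing_fibre P1 P5 : norm2 P1 = L ^ 2 -> sqd P5 P1 = L ^ 2 -> sqd P5 q4 = r ^ 2 ->
  F (mkpl P1 (0, 0) (r, 0) q4 P5).
Proof.
  intros H1 H2 H3. apply fibre_chain4; unfold mkpl. repeat split; auto.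
  - rewrite dist2_sym. apply dist2_origin_of_norm2; auto; lra.
  - apply dist2_of_sqd; [lra|]. unfold sqd; cbn [fst snd]; ring.
  - apply dist2_of_sqd; [lra|]. rewrite <- H3. unfold sqd; ring.
  - apply dist2_of_sqd; [lra|]. rewrite <- H2. unfold sqd; ring.
Qed.

Lemma linked_swing (phi : R -> R) (P5 : R -> point) :
  (forall t, continuity_pt phi t) ->
  (forall t, 0 <= t <= 1 ->
     cont_point P5 t /\ sqd (P5 t) (circ L (phi t)) = L ^ 2 /\ sqd (P5 t) q4 = r ^ 2) ->
  linked Q F (mkpl (circ L (phi 0)) (0, 0) (r, 0) q4 (P5 0))
             (mkpl (circ L (phi 1)) (0, 0) (r, 0) q4 (P5 1)).
Proof.
  intros Cphi HP5.
  apply (linked_of_path5 Q F (@fibre_config _ _) (fun t => circ L (phi t)) (fun _ => (0, 0))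
    (fun _ => (r, 0)) (fun _ => q4) P5); auto.
  - intros t Ht. destruct (HP5 t Ht) as (_ & H2 & H3). apply swing_fibre; auto. apply norm2_circ.
  - intros t Ht. destruct (HP5 t Ht) as (C5 & _).
    repeat split; try apply cp_const; try apply C5; unfold circ; cbn [fst snd]; continuity_pt_tac.
Qed.

Lemma linked_swing_folded f0 :
  linked Q F (mkpl (circ L f0) (0, 0) (r, 0) q4 (0, 0)) (mkpl (circ L fs) (0, 0) (r, 0) q4 (0, 0)).
Proof.
  pose proof (linked_swing (fun t => f0 + t * (fs - f0)) (fun _ => (0, 0))) as E.
  cbn beta in E. replace (f0 + 1 * (fs - f0)) with fs in E by ring.
  rewrite Rmult_0_l, Rplus_0_r in E. apply E; [intros; continuity_pt_tac|].
  intros t Ht. rewrite !(sqd_sym (0, 0)), !sqd_origin, norm2_circ, q4_dir, norm2_circ.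
  repeat split; try ring; apply cp_const.
Qed.

(* The reflection vanishes exactly when the apex is on the line through the origin and the knee. *)
Lemma norm2_reflect_origin_swing p :
  norm2 (reflect_origin (circ L p) q4) = 4 * (L * r * sin (p - fs)) ^ 2 / sqd q4 (circ L p).
Proof.
  rewrite norm2_reflect_origin by (pose proof (knee_apart p); lra).
  rewrite sin_minus. rewrite q4_dir at 1 2. unfold circ; cbn [fst snd]. f_equal. f_equal. ring.
Qed.

Lemma linked_swing_unfolding :
  linked Q F (mkpl (circ L fs) (0, 0) (r, 0) q4 (0, 0))
    (mkpl (circ L (fs + PI / 2)) (0, 0) (r, 0) q4 (reflect_origin (circ L (fs + PI / 2)) q4)).
Proof.
  replace ((0, 0) : point) with (reflect_origin (circ L fs) q4) at 2.
  2: { apply norm2_eq0. rewrite norm2_reflect_origin_swing, Rminus_diag, sin_0. unfold Rdiv. ring. }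
  pose proof (linked_swing (fun t => fs + t * (PI / 2))
    (fun t => reflect_origin (circ L (fs + t * (PI / 2))) q4)) as E.
  cbn beta in E. rewrite Rmult_0_l, Rplus_0_r, Rmult_1_l in E.
  apply E; [intros; continuity_pt_tac|].
  intros t Ht. pose proof (knee_apart (fs + t * (PI / 2))) as Hs.
  destruct (reflect_origin_dist (circ L (fs + t * (PI / 2))) q4) as [R1 R2]; [lra|].
  rewrite norm2_circ in R1. rewrite q4_dir, norm2_circ in R2. rewrite <- q4_dir in R2.
  split; [|split]; [|auto | rewrite R2; ring].
  unfold reflect_origin, circ, norm2, sqd in *; cbn [fst snd] in *. split; continuity_pt_tac; lra.
Qed.

Lemma norm2_reflect_origin_unfolded : 0 < norm2 (reflect_origin (circ L (fs + PI / 2)) q4).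
Proof.
  rewrite norm2_reflect_origin_swing. replace (fs + PI / 2 - fs) with (PI / 2) by ring.
  rewrite sin_PI2. pose proof (knee_apart (fs + PI / 2)).
  apply Rdiv_lt_0_compat; auto. rewrite <- Rsqr_pow2. pose proof (Rsqr_pos_lt (L * r * 1)). nra.
Qed.

End FoldedTip.

(* The apex first swings to the ray opposite to the knee, where the line through the apex and
   the knee passes through the tip at the origin; then it swings a quarter turn further with the
   tip reflected in that line. *)
Lemma linked_unfold_tip L r q : 0 < r -> 3 * r <= L -> fibre (chain4 L r) L q ->
  q 2%nat = (0, 0) -> q 3%nat = (r, 0) -> q 5%nat = (0, 0) ->
  exists q', fibre (chain4 L r) L q' /\ q' 2%nat = (0, 0) /\ q' 3%nat = (r, 0) /\
    0 < norm2 (q' 5%nat) /\ linked (chain4 L r) (fibre (chain4 L r) L) q q'.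
Proof.
  intros Hr HL Hq E2 E3 E5.
  pose proof Hq as Hq'. apply fibre_chain4 in Hq' as (D12 & _ & D34 & D45 & _).
  rewrite E2, E3, E5 in *. set (q1 := q 1%nat) in *. set (q4 := q 4%nat) in *.
  assert (N1 : norm2 q1 = L ^ 2) by (rewrite <- sqd_origin; now apply sqd_of_dist2).
  assert (N4 : norm2 q4 = r ^ 2) by (rewrite <- sqd_origin; now apply sqd_of_dist2).
  destruct (angle_of (fst q1 / L, snd q1 / L)) as [f0 [_ E0]].
  { unfold norm2 in *; cbn [fst snd]. field_simplify; [rewrite N1; field|]; lra. }
  destruct (angle_of (- fst q4 / r, - snd q4 / r)) as [fs [_ Es]].
  { unfold norm2 in *; cbn [fst snd]. field_simplify; [rewrite N4; field|]; lra. }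
  assert (Q1 : q1 = circ L f0).
  { unfold circ. injection E0 as <- <-. destruct q1; cbn [fst snd]. f_equal; field; lra. }
  assert (Q4 : q4 = circ (- r) fs).
  { unfold circ. injection Es as <- <-. destruct q4; cbn [fst snd]. f_equal; field; lra. }
  pose proof (linked_swing_folded L r Hr HL q4 fs D34 Q4 f0) as Swing1.
  pose proof (linked_swing_unfolding L r Hr HL q4 fs D34 Q4) as Swing2.
  eexists. split; [exact (proj1 (proj2 Swing2))|]. split; [reflexivity|]. split; [reflexivity|].
  split; [eapply norm2_reflect_origin_unfolded; eauto|].
  apply linked_trans with (mkpl (circ L f0) (0, 0) (r, 0) q4 (0, 0)).
  { apply linked_equiv; [apply fibre_config | exact Hq | exact (proj1 Swing1) |].
    apply equivP_agree. intros i Hi. simpl in Hi.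
    destruct i as [|[|[|[|[|[|i]]]]]]; try lia; cbn; auto. }
  exact (linked_trans _ _ _ _ _ Swing1 Swing2).
Qed.

(** * Connectedness of the fibres *)

Lemma linked_normal_tip L r x q : 0 < r -> 3 * r <= L -> L - 3 * r <= x <= L + 3 * r ->
  fibre (chain4 L r) x q -> q 2%nat = (0, 0) -> q 3%nat = (r, 0) -> 0 < norm2 (q 5%nat) ->
  linked (chain4 L r) (fibre (chain4 L r) x) q (arm_config L r x 1 0 0).
Proof.
  intros Hr HL Hx Hq E2 E3 Hn.
  pose proof Hq as Hq'. apply fibre_chain4 in Hq' as (D12 & _ & D34 & D45 & D15).
  rewrite E2, E3 in *.
  destruct (arm_angles r (q 4%nat) (q 5%nat)) as [h [y (Hh & Hy & E4 & E5)]]; auto.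
  assert (Hm : (L - x) ^ 2 <= norm2 (q 5%nat)).
  { rewrite <- sqd_origin, sqd_sym, <- D12, <- D15. apply sqd_ge_dist_diff. }
  assert (Hsg : exists sg, (sg = 1 \/ sg = -1) /\ q 1%nat = apex L x (q 5%nat) sg).
  { destruct (apex_cases L x (q 1%nat) (q 5%nat)) as [E1|E1];
      auto using sqd_of_dist2; eexists; eauto. }
  destruct Hsg as [sg [Hsg E1]]. rewrite E5 in Hn, Hm, E1.
  assert (Hsg2 : sg ^ 2 = 1) by (destruct Hsg as [-> | ->]; ring).
  apply linked_trans with (arm_config L r x sg h y).
  { apply linked_equiv; [apply fibre_config | exact Hq | now apply arm_config_fibre |].
    apply equivP_agree. intros i Hi. simpl in Hi.
    destruct i as [|[|[|[|[|[|i]]]]]]; try lia; cbn; auto. }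
  destruct Hsg as [-> | ->]; [now apply linked_arm_straighten|].
  apply linked_trans with (arm_config L r x (-1) 0 0); [now apply linked_arm_straighten|].
  apply linked_sym, linked_arm_flip; auto.
Qed.

Lemma linked_to_arm L r x p : 0 < r -> 3 * r <= L -> L - 3 * r <= x <= L + 3 * r ->
  fibre (chain4 L r) x p -> linked (chain4 L r) (fibre (chain4 L r) x) p (arm_config L r x 1 0 0).
Proof.
  intros Hr HL Hx Hp.
  destruct (normalize_pair (p 2%nat) (p 3%nat)) as [g (Hg & G2 & G3)].
  pose proof Hp as Hp'. apply fibre_chain4 in Hp' as (_ & D23 & _). rewrite D23 in G3.
  set (q := fun i => g (p i)).
  assert (Hq : fibre (chain4 L r) x q) by now apply fibre_isometry.
  apply linked_trans with q.
  { apply linked_equiv; [apply fibre_config | exact Hp | exact Hq | now apply equivP_isometry]. }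
  destruct (Req_dec (norm2 (q 5%nat)) 0) as [Z|NZ].
  - apply norm2_eq0 in Z.
    pose proof Hq as Hq'. apply fibre_chain4 in Hq' as (D12 & _ & _ & _ & D15).
    assert (x = L) by (rewrite <- D15, <- D12, Z; unfold q; now rewrite G2).
    clear D12 D15. subst x.
    destruct (linked_unfold_tip L r q) as [q' (Hq' & Q2 & Q3 & Qn & Hl)]; auto.
    apply linked_trans with q'; auto. now apply linked_normal_tip.
  - apply linked_normal_tip; auto.
    pose proof (sqd_ge0 (q 5%nat) (0, 0)). rewrite sqd_origin in *. lra.
Qed.

Definition collapsed_config (L : R) : placement := mkpl (0, 0) (L, 0) (L, 0) (L, 0) (L, 0).

Lemma collapsed_config_fibre L : 0 <= L -> fibre (chain4 L 0) L (collapsed_config L).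
Proof.
  intros HL. apply fibre_chain4; unfold collapsed_config, mkpl.
  repeat split; apply dist2_of_sqd; try lra; unfold sqd; cbn [fst snd]; ring.
Qed.

Lemma equivP_collapsed_config L x p :
  fibre (chain4 L 0) x p -> equivP (chain4 L 0) p (collapsed_config L).
Proof.
  intros Hp. apply fibre_chain4 in Hp as (D12 & D23 & D34 & D45 & _).
  apply dist2_eq0 in D23, D34, D45.
  destruct (normalize_pair (p 1%nat) (p 2%nat)) as [g (Hg & G1 & G2)].
  rewrite D12 in G2. exists g. split; auto.
  intros i Hi. simpl in Hi. destruct i as [|[|[|[|[|[|i]]]]]]; try lia; cbn; congruence.
Qed.

Lemma range_chain4 L r x : 0 <= r -> 3 * r <= L ->
  (range (chain4 L r) x <-> L - 3 * r <= x <= L + 3 * r).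
Proof.
  intros Hr HL. split; [intros [p Hp]; exact (fibre_chain4_bounds L r x p Hp)|].
  intros Hx. destruct (Rle_lt_or_eq_dec 0 r Hr) as [Hr'|<-].
  - exists (arm_config L r x 1 0 0). apply arm_config_fibre; auto; try ring;
      rewrite norm2_tip, cos_0; nra.
  - replace x with L by lra. exists (collapsed_config L). apply collapsed_config_fibre. lra.
Qed.

Lemma connectedM_fibre_chain4 L r x : 0 <= r -> 3 * r <= L -> L - 3 * r <= x <= L + 3 * r ->
  connectedM (chain4 L r) (fibre (chain4 L r) x).
Proof.
  intros Hr HL Hx. destruct (Rle_lt_or_eq_dec 0 r Hr) as [Hr'|<-].
  - apply (connectedM_of_linked _ _ (arm_config L r x 1 0 0)). intros p Hp.
    now apply linked_to_arm.
  - replace x with L in * by lra.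
    apply (connectedM_of_linked _ _ (collapsed_config L)). intros p Hp.
    apply linked_equiv; [apply fibre_config | exact Hp | apply collapsed_config_fibre; lra |].
    now apply equivP_collapsed_config with L.
Qed.

Theorem mainTheorem13 (a b : R) (ha : 0 <= a) (hab : a <= b) :
  (forall x : R, range (linkQ a b) x <-> a <= x <= b) /\
  (forall x : R, nabla (linkQ a b) x <-> a <= x <= b).
Proof.
  change (linkQ a b) with (chain4 ((a + b) / 2) ((b - a) / 6)).
  assert (Hr : 0 <= (b - a) / 6) by lra.
  assert (HL : 3 * ((b - a) / 6) <= (a + b) / 2) by lra.
  assert (Hx : forall x, (a + b) / 2 - 3 * ((b - a) / 6) <= x <= (a + b) / 2 + 3 * ((b - a) / 6)
                    <-> a <= x <= b) by (intros; split; intros; lra).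
  split; intros x; [now rewrite range_chain4, Hx|].
  unfold nabla. rewrite range_chain4, Hx by auto.
  split; [tauto|]. intros Hab. split; auto.
  apply connectedM_fibre_chain4; auto. now apply Hx.
Qed.
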